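(* Let $X$ be a strongly connected finite digraph with $\delta(X)=0$. Then there exists a nonzero integer $m(X)$ such that $$g_X^*(1)=m(X)\cdot\#\mathrm{BF}(X)_{\rm tors}.$$
   Context: A digraph $X=(V_X,E_X)$ has incidence map $e\mapsto(o(e),t(e))$; it is strongly connected if for any two distinct vertices there is a directed path from the first to the second. For finite $X$: $\mathcal{A}_X:\mathbb{Z}V_X\to\mathbb{Z}V_X$, $v\mapsto\sum_{e:o(e)=v}t(e)$; Bowen--Franks operator $\mathcal{BF}_X=\mathcal{I}-\mathcal{A}_X$; $\mathrm{BF}(X)=\mathrm{coker}(\mathcal{BF}_X)$. $g_X(u)=\det(\mathcal{I}-\mathcal{A}_Xu)\in\mathbb{Z}[u]$; $r_X=\mathrm{ord}_{u=1}g_X(u)$; $g_X^*(1)$ is the first non-vanishing coefficient of the Taylor expansion of $g_X$ at $u=1$ (i.e. the coefficient of $(u-1)^{r_X}$). $\delta(X)=r_X-\mathrm{rank}_{\mathbb{Z}}\mathrm{BF}(X)$. *)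

From HB Require Import structures.
From mathcomp Require Import all_boot all_order all_algebra.
Set Implicit Arguments. Unset Strict Implicit. Unset Printing Implicit Defensive.
Import Order.TTheory GRing.Theory Num.Theory.
Local Open Scope ring_scope.

(* A finite digraph: finite vertex type V, finite edge type E, incidence maps
   o (origin) and t (terminus).  Multiple edges and loops are allowed. *)

Definition edge_rel (V E : finType) (o t : E -> V) : rel V :=
  fun x y => [exists e : E, (o e == x) && (t e == y)].

Definition strongly_connected (V E : finType) (o t : E -> V) : Prop :=
  forall v w : V, v != w -> connect (edge_rel o t) v w.

(* adjacency operator A_X : Z V -> Z V, v |-> sum_{o(e)=v} t(e), as a matrix
   acting on row vectors (x |-> x *m A), vertices indexed via enum_val:
   entry (i,j) = number of edges from vertex i to vertex j. *)
Definition adjmx (V E : finType) (o t : E -> V) : 'M[int]_#|V| :=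
  \matrix_(i, j) (#|[set e : E | (o e == enum_val i) && (t e == enum_val j)]|)%:Z.

Definition BFop (V E : finType) (o t : E -> V) : 'M[int]_#|V| :=
  1%:M - adjmx o t.

Definition gX (V E : finType) (o t : E -> V) : {poly int} :=
  \det (1%:M - 'X *: map_mx polyC (adjmx o t)).

Definition taylor1 (p : {poly int}) : {poly int} := p \Po ('X + 1).

Definition ord_at1 (p : {poly int}) : nat :=
  find (fun c : int => c != 0) (taylor1 p).

Definition lead_at1 (p : {poly int}) : int := (taylor1 p)`_(ord_at1 p).

(* Cokernel of M : Z^n -> Z^n (row vectors, x |-> x *m M) *)
Definition in_img (n : nat) (M : 'M[int]_n) (y : 'rV[int]_n) : Prop :=
  exists x : 'rV[int]_n, y = x *m M.

Definition is_tors (n : nat) (M : 'M[int]_n) (y : 'rV[int]_n) : Prop :=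
  exists k : int, k != 0 /\ in_img M (k *: y).

(* t is the cardinality of the torsion subgroup of coker M: there is a
   system of t representatives of the torsion classes, pairwise distinct
   modulo the image and covering all torsion classes. *)
Definition tors_card_is (n : nat) (M : 'M[int]_n) (t : nat) : Prop :=
  exists s : seq 'rV[int]_n,
    [/\ size s = t,
        forall y, y \in s -> is_tors M y,
        forall i j : nat, (i < size s)%N -> (j < size s)%N ->
          in_img M (nth 0 s i - nth 0 s j) -> i = j
      & forall y, is_tors M y -> exists2 z, z \in s & in_img M (y - z)].

Definition coker_indep (n k : nat) (M : 'M[int]_n) (f : 'I_k -> 'rV[int]_n) :=
  forall c : 'I_k -> int, in_img M (\sum_(i < k) c i *: f i) -> forall i, c i = 0.

Definition coker_rank_is (n : nat) (M : 'M[int]_n) (r : nat) : Prop :=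
  (exists f : 'I_r -> 'rV[int]_n, coker_indep M f) /\
  (forall f : 'I_r.+1 -> 'rV[int]_n, ~ coker_indep M f).

(* delta(X) = 0, i.e. r_X = rank_Z BF(X) *)
Definition delta_zero (V E : finType) (o t : E -> V) : Prop :=
  coker_rank_is (BFop o t) (ord_at1 (gX o t)).

From HB Require Import structures.
From mathcomp Require Import all_boot all_order all_algebra zify ring.
Set Implicit Arguments. Unset Strict Implicit. Unset Printing Implicit Defensive.
Import Order.TTheory GRing.Theory Num.Theory.
Local Open Scope ring_scope.

(* Write 1 - A = L D R in Smith normal form, D = diag(d_i), so that
   coker(1 - A) is the sum of the Z/d_i: its torsion has order the product of
   the nonzero |d_i| and its rank is the number z of vanishing d_i.  With
   u = 1 + x and B = L^-1 A R^-1 we get g(1 + x) = det((1 - A) - x A)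
   = det L det R det(D - x B).  The z rows of D - x B with d_i = 0 are
   divisible by x, so g(1 + x) = x^z Q(x); at x = 0 the other rows reduce to
   d_i times unit rows, so the product of the nonzero d_i divides Q(0).
   Hence r_X >= z, while delta(X) = 0 gives an independent family of r_X
   classes in the cokernel, so r_X <= z.  Thus g^*(1) = Q(0), which is
   nonzero because g(0) = 1. *)

Lemma eq_of_dvdz_subn (d : int) (a b : nat) :
  (a < `|d|)%N -> (b < `|d|)%N -> (d %| a%:Z - b%:Z)%Z -> a = b.
Proof.
move=> ltad ltbd; rewrite -eqz_mod_dvd -modz_abs -[(b %% d)%Z]modz_abs.
by rewrite !modz_small; [move/eqP; lia | lia | lia].
Qed.

Lemma int_mx_left_kernel k m (G : 'M[int]_(k, m)) :
  (m < k)%N -> exists2 c : 'rV_k, c != 0 & c *m G = 0.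
Proof.
move=> ltmk; have [L unitL [R _ [d _ defG]]] := int_Smith_normal_form G.
pose j0 : 'I_k := Ordinal ltmk; exists (row j0 (invmx L)).
  apply: contra_neq (oner_neq0 int) => c0.
  have /rowP/(_ j0) := row_mul j0 (invmx L) L.
  by rewrite mulVmx // c0 mul0mx !mxE eqxx.
have rowD0 : row j0 (\matrix_(i, j) (d`_i *+ (i == j :> nat))) = 0 :> 'rV_m.
  apply/rowP => j; rewrite !mxE.
  by rewrite gtn_eqF ?mulr0n // (leq_trans (ltn_ord j)).
by rewrite -row_mul defG !mulmxA mulVmx // mul1mx row_mul rowD0 mul0mx.
Qed.

Lemma taylor1_det_one_sub_XA n (A : 'M[int]_n) :
  taylor1 (\det (1%:M - 'X *: map_mx polyC A)) =
  \det (map_mx polyC (1%:M - A) - 'X *: map_mx polyC A).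
Proof.
rewrite /taylor1 -det_map_mx; congr (\det _).
apply/matrixP => i j; rewrite !mxE.
rewrite rmorphB rmorphM /= comp_polyX comp_polyC rmorph_nat.
by rewrite (rmorphB polyC) /= rmorph_nat; ring.
Qed.

Section SmithForm.

Variables (n : nat) (L R : 'M[int]_n) (d : seq int).
Hypotheses (unitL : L \in unitmx) (unitR : R \in unitmx).

Let D : 'M[int]_n := \matrix_(i, j) (d`_i *+ (i == j :> nat)).
Let M : 'M[int]_n := L *m D *m R.

Lemma mul_row_smith_diag (u : 'rV[int]_n) i : (u *m D) ord0 i = u ord0 i * d`_i.
Proof.
rewrite !mxE (bigD1 i) //= big1 ?addr0 => [|j neq_ji].
  by rewrite mxE eqxx mulr1n.
move: neq_ji; rewrite -val_eqE => /negPf neq_ji.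
by rewrite mxE neq_ji mulr0n mulr0.
Qed.

Lemma smith_in_imgP x :
  in_img M x <-> forall i, (d`_i %| (x *m invmx R) ord0 i)%Z.
Proof.
split=> [[y ->] i | dvd_d].
  by rewrite /M mulmxA mulmxK // mulmxA mul_row_smith_diag dvdz_mull.
pose u : 'rV[int]_n := \row_i (((x *m invmx R) ord0 i) %/ d`_i)%Z.
have uD : u *m D = x *m invmx R.
  by apply/rowP => i; rewrite mul_row_smith_diag mxE divzK.
by exists (u *m invmx L); rewrite /M !mulmxA mulmxKV // uD mulmxKV.
Qed.

Definition zero_factors : {set 'I_n} := [set i : 'I_n | d`_i == 0].

Definition nzfactor (i : 'I_n) : int := if d`_i == 0 then 1 else d`_i.

Definition nzfactor_prod : int := \prod_i nzfactor i.

Lemma nzfactor_neq0 i : nzfactor i != 0.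
Proof. by rewrite /nzfactor; case: ifP => // /negbT. Qed.

Lemma nzfactor_prod_neq0 : nzfactor_prod != 0.
Proof.
by rewrite /nzfactor_prod prodf_seq_neq0; apply/allP => i _; apply: nzfactor_neq0.
Qed.

Lemma dvdz_nzfactor (i : 'I_n) x : (d`_i %| x)%Z -> (nzfactor i %| x)%Z.
Proof. by rewrite /nzfactor; case: ifP => [_ _ | _]; rewrite ?dvd1z. Qed.

Lemma dvdz_nzfactor_prod (i : 'I_n) : d`_i != 0 -> (d`_i %| nzfactor_prod)%Z.
Proof.
move=> d_neq0; rewrite /nzfactor_prod (bigD1 i) //= /nzfactor (negPf d_neq0).
exact: dvdz_mulr.
Qed.

Definition tors_index := {dffun forall i : 'I_n, 'I_`|nzfactor i|}.

Definition tors_rep (f : tors_index) : 'rV[int]_n := \row_i (f i : nat)%:Z *m R.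

Lemma tors_repK f i : (tors_rep f *m invmx R) ord0 i = (f i : nat)%:Z.
Proof. by rewrite mulmxK // mxE. Qed.

Lemma card_tors_index : #|tors_index| = `|nzfactor_prod|%N.
Proof.
rewrite card_dep_ffun foldrE big_map big_enum /=.
rewrite /nzfactor_prod (big_morph absz abszM (erefl : absz 1 = 1%N)).
by apply: eq_bigr => i _; rewrite card_ord.
Qed.

Lemma tors_rep_inj f g : in_img M (tors_rep f - tors_rep g) -> f = g.
Proof.
move/smith_in_imgP => dvd_fg; apply/ffunP => i; apply/val_inj.
apply: (@eq_of_dvdz_subn (nzfactor i)); rewrite ?ltn_ord //.
by apply: dvdz_nzfactor; have := dvd_fg i; rewrite -mulmxBl mulmxK // !mxE.
Qed.

Lemma tors_rep_is_tors f : is_tors M (tors_rep f).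
Proof.
exists nzfactor_prod; split; first exact: nzfactor_prod_neq0.
apply/smith_in_imgP => i; rewrite -scalemxAl mxE tors_repK.
have [d0 | d_neq0] := eqVneq d`_i 0; last exact/dvdz_mulr/dvdz_nzfactor_prod.
suff : (f i < 1)%N by rewrite ltnS leqn0 => /eqP ->; rewrite mulr0 dvdz0.
by have := ltn_ord (f i); move: (f i : nat) => a; rewrite /nzfactor d0 eqxx.
Qed.

Lemma tors_rep_cover y :
  is_tors M y -> exists f, in_img M (y - tors_rep f).
Proof.
rewrite -[y](mulmxKV unitR); move: (y *m invmx R) => w {y}.
move=> [k [k_neq0 /smith_in_imgP dvd_kw]].
have mod_lt i : (`|(w ord0 i %% nzfactor i)%Z| < `|nzfactor i|)%N.
  have := ltz_mod (w ord0 i) (nzfactor_neq0 i).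
  have := modz_ge0 (w ord0 i) (nzfactor_neq0 i); lia.
exists [ffun i => Ordinal (mod_lt i)]; apply/smith_in_imgP => i.
rewrite mulmxBl !mulmxK // !mxE ffunE /= gez0_abs ?modz_ge0 ?nzfactor_neq0 //.
rewrite /nzfactor; case: ifP => [/eqP d0 | _]; last first.
  by rewrite {1}(divz_eq (w ord0 i) d`_i) addrK dvdz_mull.
have := dvd_kw i; rewrite -scalemxAl mulmxK // mxE d0 dvd0z mulf_eq0.
by rewrite (negPf k_neq0) => /eqP ->; rewrite modz1 subrr dvdz0.
Qed.

Lemma smith_tors_card : tors_card_is M #|tors_index|.
Proof.
exists (map tors_rep (enum tors_index)); split.
- by rewrite size_map cardE.
- by move=> y /mapP [f _ ->]; apply: tors_rep_is_tors.
- move=> i j; rewrite size_map => lti ltj.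
  have [f0 _] : exists f0 : tors_index, true.
    by move: lti; case: (enum _) => [|f _] //; exists f.
  rewrite (nth_map f0 _ _ lti) (nth_map f0 _ _ ltj) => /tors_rep_inj.
  by move/(uniqP f0 (enum_uniq _)); apply.
- move=> y /tors_rep_cover [f img_f]; exists (tors_rep f) => //.
  by apply: map_f; rewrite mem_enum.
Qed.

Lemma coker_indep_card_le k (f : 'I_k -> 'rV[int]_n) :
  coker_indep M f -> (k <= #|zero_factors|)%N.
Proof.
move=> indep_f; rewrite leqNgt; apply/negP => lt_zk.
pose G := \matrix_(j < k, l < #|zero_factors|)
            (f j *m invmx R) ord0 (enum_val l).
have [c c_neq0 cG0] := int_mx_left_kernel G lt_zk.
pose a j := nzfactor_prod * c ord0 j.
have img_a : in_img M (\sum_j a j *: f j).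
  apply/smith_in_imgP => i; rewrite mulmx_suml summxE.
  under eq_bigr do rewrite -scalemxAl mxE /a -mulrA.
  rewrite -mulr_sumr; have [d0 | d_neq0] := eqVneq d`_i 0; last first.
    exact/dvdz_mulr/dvdz_nzfactor_prod.
  have zi : i \in zero_factors by rewrite inE d0.
  have -> : \sum_j c ord0 j * (f j *m invmx R) ord0 i
             = (c *m G) ord0 (enum_rank_in zi i).
    by rewrite mxE; apply: eq_bigr => j _; rewrite /G mxE enum_rankK_in.
  by rewrite cG0 mxE mulr0 dvdz0.
move/eqP: c_neq0; apply; apply/rowP => j; have /eqP := indep_f a img_a j.
by rewrite mulf_eq0 (negPf nzfactor_prod_neq0) mxE => /eqP.
Qed.

Lemma det_smith_diag_sub_X (B : 'M[int]_n) :
  exists2 Q : {poly int},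
    \det (map_mx polyC D - 'X *: map_mx polyC B) = 'X^#|zero_factors| * Q
    & (nzfactor_prod %| Q`_0)%Z.
Proof.
pose e : 'rV[{poly int}]_n := \row_i (if d`_i == 0 then - 'X else 1).
pose N := \matrix_(i, j) (if d`_i == 0 then (B i j)%:P
                          else (d`_i *+ (i == j :> nat))%:P - 'X * (B i j)%:P).
have defDB : map_mx polyC D - 'X *: map_mx polyC B = diag_mx e *m N.
  apply/matrixP => i j; rewrite mul_diag_mx !mxE.
  by case: ifP => [/eqP -> | _]; rewrite ?mul0rn ?polyC0 ?sub0r ?mulNr ?mul1r.
have det_e : \det (diag_mx e) = (- 'X) ^+ #|zero_factors|.
  rewrite det_diag; under eq_bigr do rewrite mxE.
  by rewrite -big_mkcond /= -prodr_const; apply: eq_bigl => i; rewrite inE.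
pose W := \matrix_(i, j) (if d`_i == 0 then B i j else (i == j :> nat)%:R).
have N_at0 : map_mx (horner_eval 0) N = diag_mx (\row_i nzfactor i) *m W.
  apply/matrixP => i j; rewrite mul_diag_mx !mxE horner_evalE /nzfactor.
  by case: ifP => _; rewrite !hornerE ?mul1r ?mulr_natr.
exists (((-1) ^+ #|zero_factors|)%:P * \det N).
  by rewrite defDB det_mulmx det_e (exprNn 'X) rmorphXn rmorphN1 mulrCA mulrA.
rewrite coefCM -horner_coef0 -horner_evalE -det_map_mx N_at0 det_mulmx det_diag.
by under eq_bigr do rewrite mxE; rewrite dvdz_mull ?dvdz_mulr.
Qed.

Lemma taylor1_det_smith (A : 'M[int]_n) :
  1%:M - A = M ->
  exists2 Q : {poly int},
    taylor1 (\det (1%:M - 'X *: map_mx polyC A)) = 'X^#|zero_factors| * Q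
    & (nzfactor_prod %| Q`_0)%Z.
Proof.
move=> defM.
have [B defA] : exists B, A = L *m B *m R.
  by exists (invmx L *m A *m invmx R); rewrite !mulmxA mulmxV // mul1mx mulmxKV.
have [Q defQ dvdQ] := det_smith_diag_sub_X B.
exists ((\det L * \det R)%:P * Q); last by rewrite coefCM dvdz_mull.
rewrite taylor1_det_one_sub_XA defM defA /M !map_mxM.
rewrite scalemxAl scalemxAr -mulmxBl -mulmxBr !det_mulmx defQ !det_map_mx.
by rewrite rmorphM /=; ring.
Qed.

End SmithForm.

Lemma taylor1_eq0 (p : {poly int}) : (taylor1 p == 0) = (p == 0).
Proof.
apply/eqP/eqP => [t0 | ->]; last by rewrite /taylor1 comp_poly0.
by rewrite -(comp_polyXaddC_K p 1) polyC1 -/(taylor1 p) t0 comp_poly0.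
Qed.

Lemma lead_at1_neq0 (p : {poly int}) : p != 0 -> lead_at1 p != 0.
Proof.
rewrite -taylor1_eq0 /lead_at1 /ord_at1 => tp_neq0.
apply: (@nth_find _ 0 (fun c : int => c != 0)); apply/hasP.
exists (lead_coef (taylor1 p)); last by rewrite lead_coef_eq0.
by rewrite lead_coefE mem_nth // prednK // size_poly_gt0.
Qed.

Lemma lead_at1_XnM (p Q : {poly int}) k :
  p != 0 -> taylor1 p = 'X^k * Q -> (ord_at1 p <= k)%N -> lead_at1 p = Q`_0.
Proof.
move=> p_neq0 defp le_ord_k.
have ord_k : ord_at1 p = k.
  apply/eqP; rewrite eqn_leq le_ord_k leqNgt; apply/negP => lt_ord_k.
  by have := lead_at1_neq0 p_neq0; rewrite /lead_at1 defp coefXnM lt_ord_k eqxx.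
by rewrite /lead_at1 ord_k defp coefXnM ltnn subnn.
Qed.

Lemma det_one_sub_XA_neq0 n (A : 'M[int]_n) :
  \det (1%:M - 'X *: map_mx polyC A) != 0.
Proof.
have at0 : (\det (1%:M - 'X *: map_mx polyC A)).[0] = 1.
  rewrite -horner_evalE -det_map_mx -(det1 int n); congr (\det _).
  apply/matrixP => i j; rewrite !mxE rmorphB rmorphM rmorph_nat /=.
  by rewrite horner_evalE hornerX mul0r subr0.
by apply: (contra_eq_neq _ (oner_neq0 int)) => g0; rewrite -at0 g0 horner0.
Qed.

Lemma dvdz_neq0_mul_absz (t x : int) :
  (t %| x)%Z -> x != 0 -> exists m : int, m != 0 /\ x = m * `|t|%:R.
Proof.
move=> t_dvd_x x_neq0; have : (`|t|%:Z %| x)%Z by move: t_dvd_x; rewrite !dvdzE.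
move=> /dvdzP [m defx]; exists m; split; last by rewrite defx natz.
by apply: contra_neq x_neq0 => m0; rewrite defx m0 mul0r.
Qed.

Lemma lead_at1_det_one_sub_XA n (A : 'M[int]_n) :
  coker_rank_is (1%:M - A) (ord_at1 (\det (1%:M - 'X *: map_mx polyC A))) ->
  exists tor : nat, tors_card_is (1%:M - A) tor /\
    exists m : int, m != 0 /\
      lead_at1 (\det (1%:M - 'X *: map_mx polyC A)) = m * tor%:R.
Proof.
have [L unitL [R unitR [d _ defM]]] := int_Smith_normal_form (1%:M - A).
rewrite defM => -[[f /(coker_indep_card_le unitL unitR) le_ord] _].
have [Q defQ dvdQ] := taylor1_det_smith unitL unitR defM.
have lead_Q := lead_at1_XnM (det_one_sub_XA_neq0 A) defQ le_ord.
exists #|tors_index n d|; split; first exact: smith_tors_card.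
rewrite lead_Q card_tors_index; apply: dvdz_neq0_mul_absz dvdQ _.
by rewrite -lead_Q lead_at1_neq0 ?det_one_sub_XA_neq0.
Qed.

Theorem theorem2p6 (V E : finType) (o t : E -> V) :
  strongly_connected o t -> delta_zero o t ->
  exists tor : nat, tors_card_is (BFop o t) tor /\
    exists m : int, m != 0 /\ lead_at1 (gX o t) = m * tor%:R.
Proof. by move=> _; apply: lead_at1_det_one_sub_XA. Qed.
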